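(* Let $\mathcal G$ be a Petri game with one system player whose underlying net is finite and bounded. If Player~0 has a winning strategy in $\mathit{Graph}(\mathcal G)$, then Player~0 has a winning strategy in $\mathit{Graph}'(\mathcal G)$.
   Context: Petri nets. A Petri net is a tuple $\mathcal N=(\mathcal P,\mathcal T,\mathcal F,\mathit{In})$ where the set of places $\mathcal P$ and the set of transitions $\mathcal T$ are disjoint, the flow relation $\mathcal F$ is a multiset over $(\mathcal P\times\mathcal T)\cup(\mathcal T\times\mathcal P)$, and the initial marking $\mathit{In}$ is a finite multiset over $\mathcal P$. For a node $x$, the precondition ${}^\bullet x$ is the multiset with ${}^\bullet x(y)=\mathcal F(y,x)$ and the postcondition $x^\bullet$ is the multiset with $x^\bullet(y)=\mathcal F(x,y)$; every transition $t$ must satisfy $0<|{}^\bullet t|<\infty$ and $0<|t^\bullet|<\infty$. A marking is a finite multiset over $\mathcal P$. A transition $t$ is enabled in a marking $M$ if ${}^\bullet t\subseteq M$ (multiset inclusion); firing it yields $M'=M-{}^\bullet t+t^\bullet$, written $M\xrightarrow{t}M'$. A marking is reachable if it is obtained from $\mathit{In}$ by firing a finite sequence of transitions; $\mathcal R(\mathcal N)$ denotes the set of reachable markings. $\mathcal N$ is finite if $\mathcal P\cup\mathcal T$ is finite, $k$-bounded if $M(p)\le k$ for all $M\in\mathcal R(\mathcal N)$ and places $p$, bounded if $k$-bounded for some $k$. Multiset difference is truncated at $0$; $+$ is multiset sum. Petri games. A Petri game is $\mathcal G=(\mathcal P_S,\mathcal P_E,\mathcal T,\mathcal F,\mathit{In},\mathcal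 B)$ where $\mathcal P_S$ (system places) and $\mathcal P_E$ (environment places) are disjoint, $\mathcal N=(\mathcal P_S\cup\mathcal P_E,\mathcal T,\mathcal F,\mathit{In})$ is a finite Petri net (the underlying net) and $\mathcal B$ is a set of markings (bad markings). A transition $t$ is purely environmental if ${}^\bullet t\subseteq\mathcal P_E$, otherwise it is a system transition. $\mathcal G$ has one system player if every $M\in\mathcal R(\mathcal N)$ contains exactly one token on system places; that place is denoted $s_M$, and $s_M^\bullet$ is the set of transitions having $s_M$ in their precondition. Graph games. A graph game $(\mathcal V_0,\mathcal V_1,\mathcal I,\mathcal E,\mathcal X)$ has disjoint vertex sets $\mathcal V_0,\mathcal V_1$ (of Players 0 and 1), initial vertex $\mathcal I$, edge relation $\mathcal E$ and bad vertices $\mathcal X$. A play is a maximal (finite or infinite) sequence $v_0v_1\dots$ with $v_0=\mathcal I$ and $(v_i,v_{i+1})\in\mathcal E$; it is won by Player~0 if no $v_i\in\mathcal X$. A strategy for Player~0 is a vertex-labeled tree whose root is labeled $\mathcal I$, where a node labeled with a $\mathcal V_1$ vertex has one child for each successor vertex and a node labeled with a $\mathcal V_0$ vertex having a successor has exactly one child labeled with one successor; it is winning if all maximal paths are labeled with plays won by Player~0. The game $\mathit{Graph}(\mathcal G)$: $\mathcal V_0=\{(M,\top)\mid M\in\mathcal R(\mathcal N)\}$, $\mathcal V_1=\{(M,c)\mid M\in\mathcal R(\mathcal N),\,c\subseteq s_M^\bullet\}$, $\mathcal I=(\mathit{In},\top)$. Edges: (E1) $(M,\top)\to(M,c)$ for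 every $c\subseteq s_M^\bullet$; (E2) $(M,c)\to(M',c)$ whenever some purely environmental $\mathbf t$ satisfies $M\xrightarrow{\mathbf t}M'$; (E3) $(M,c)\to(M',\top)$ whenever some system transition $\mathbf t\in c$ satisfies $M\xrightarrow{\mathbf t}M'$. Bad vertices: all $(M,c)\in\mathcal V_1$ such that (X1) $M\in\mathcal B$; or (X2a) two distinct transitions of $c$ are enabled in $M$; or (X2b) some $\mathbf t\in c$ is enabled in $M$ and $0<{}^\bullet\mathbf t(p)<M(p)$ for some place $p$; or (X3) some transition is enabled in $M$, every transition enabled in $M$ is a system transition, and no transition enabled in $M$ lies in $c$. The game $\mathit{Graph}'(\mathcal G)$: $\mathcal V'_0=\{(M,\top,\{s_M\})\mid M\in\mathcal R(\mathcal N)\}$, $\mathcal V'_1=\{(M,c,R)\mid M\in\mathcal R(\mathcal N),\,c\subseteq s_M^\bullet,\,R$ a multiset with $s_M\in R\subseteq M\}$, $\mathcal I'=(\mathit{In},\top,\{s_{\mathit{In}}\})$. Edges: (E'1) $(M,\top,\{s_M\})\to(M,c,\{s_M\})$ for every $c\subseteq s_M^\bullet$; (E'2) $(M,c,R)\to(M',c,R')$ whenever some purely environmental $\mathbf t$ satisfies $M\xrightarrow{\mathbf t}M'$ and $R'=R-{}^\bullet\mathbf t+\{o\}$ for some place $o\in\mathbf t^\bullet$; (E'3) $(M,c,R)\to(M',\top,\{s_{M'}\})$ whenever some system transition $\mathbf t\in c$ satisfies $M\xrightarrow{\mathbf t}M'$ and $R\subseteq{}^\bullet\mathbf t$. Bad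 vertices: all $(M,c,R)\in\mathcal V'_1$ such that $(M,c)$ satisfies one of the conditions (X1), (X2a), (X2b), (X3) above. *)

From mathcomp Require Import all_boot.
Set Implicit Arguments. Unset Strict Implicit. Unset Printing Implicit Defensive.

Definition marking (P : finType) := {ffun P -> nat}.

Definition msubset (P : finType) (A B : marking P) : bool := [forall p, A p <= B p].
Definition madd (P : finType) (A B : marking P) : marking P := [ffun p => A p + B p].
(* truncated difference *)
Definition mdiff (P : finType) (A B : marking P) : marking P := [ffun p => A p - B p].
Definition msingle (P : finType) (o : P) : marking P := [ffun p => if p == o then 1 else 0].
Definition msize (P : finType) (A : marking P) : nat := \sum_p A p.

Record petri_game (P T : finType) := PetriGame {
  sysp : pred P;
  pre : T -> marking P;
  post : T -> marking P;
  init_mk : marking P;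
  bad_mk : marking P -> Prop
}.

Section PetriGames.
Variables (P T : finType) (G : petri_game P T).

Definition valid_transitions : Prop :=
  forall t, 0 < msize (pre G t) /\ 0 < msize (post G t).

Definition enabled (t : T) (M : marking P) : bool := msubset (pre G t) M.
Definition fire (M : marking P) (t : T) : marking P := madd (mdiff M (pre G t)) (post G t).

Inductive reachable : marking P -> Prop :=
| reach_init : reachable (init_mk G)
| reach_step M t : reachable M -> enabled t M -> reachable (fire M t).

Definition bounded : Prop :=
  exists k, forall M, reachable M -> forall p, M p <= k.

Definition one_system_player : Prop :=
  forall M, reachable M -> \sum_(p | sysp G p) M p = 1.

Definition purely_env (t : T) : bool := [forall p, (0 < pre G t p) ==> ~~ sysp G p].
Definition system_tr (t : T) : bool := ~~ purely_env t.

(* s_M : the system place carrying a token (unique for reachable M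
   under one_system_player) *)
Definition sM (M : marking P) : option P := [pick p | sysp G p && (0 < M p)].
Definition sMset (M : marking P) : marking P :=
  [ffun p => if sM M == Some p then 1 else 0].
Definition postS (M : marking P) : {set T} :=
  [set t | if sM M is Some s then 0 < pre G t s else false].

Definition bad_cond (M : marking P) (c : {set T}) : Prop :=
  bad_mk G M
  \/ (exists t1 t2, [/\ t1 \in c, t2 \in c, t1 != t2, enabled t1 M & enabled t2 M])
  \/ (exists t, [/\ t \in c, enabled t M & exists p, 0 < pre G t p < M p])
  \/ [/\ (exists t, enabled t M),
         (forall t, enabled t M -> system_tr t) &
         (forall t, enabled t M -> t \notin c)].
End PetriGames.

(* Graph games over a carrier type V (vertices are those in V0 or V1). *)
Record graph_game (V : Type) := GraphGame {
  gV0 : V -> Prop;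
  gV1 : V -> Prop;
  gI : V;
  gE : V -> V -> Prop;
  gX : V -> Prop
}.

Section GraphGames.
Variables (V : Type) (GG : graph_game V).

(* A finite sequence I :: s is a play: consecutive edges and maximal. *)
Definition fin_play (s : seq V) : Prop :=
  (forall i, i < size s -> gE GG (nth (gI GG) (gI GG :: s) i) (nth (gI GG) s i))
  /\ (forall w, ~ gE GG (last (gI GG) s) w).
Definition inf_play (f : nat -> V) : Prop :=
  f 0 = gI GG /\ forall n, gE GG (f n) (f n.+1).
Definition fin_play_won (s : seq V) : Prop :=
  fin_play s /\ forall i, i <= size s -> ~ gX GG (nth (gI GG) (gI GG :: s) i).
Definition inf_play_won (f : nat -> V) : Prop :=
  inf_play f /\ forall n, ~ gX GG (f n).

(* A vertex-labeled tree is represented by the set S of label sequences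
   of its nodes: the node with label path I :: s is represented by s.
   (Children of a node carry pairwise distinct labels in a strategy, so
   this representation is faithful.) *)
Definition is_strategy (S : seq V -> Prop) : Prop :=
  [/\ S [::],
      (forall s w, S (rcons s w) -> S s),
      (forall s w, S s -> S (rcons s w) -> gE GG (last (gI GG) s) w),
      (forall s, S s -> gV1 GG (last (gI GG) s) ->
         forall w, gE GG (last (gI GG) s) w -> S (rcons s w)) &
      (forall s, S s -> gV0 GG (last (gI GG) s) ->
         (exists w, gE GG (last (gI GG) s) w) ->
         exists w, gE GG (last (gI GG) s) w /\
                   forall w', S (rcons s w') <-> w' = w)].

Definition winning_strategy (S : seq V -> Prop) : Prop :=
  is_strategy S
  /\ (forall s, S s -> (forall w, ~ S (rcons s w)) -> fin_play_won s)
  /\ (forall f : nat -> V, f 0 = gI GG ->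
        (forall n, S (mkseq (fun i => f i.+1) n)) -> inf_play_won f).

Definition player0_wins : Prop := exists S, winning_strategy S.
End GraphGames.

(* The game Graph(G).  Vertices (M, None) stand for (M, T) (top).      *)
Section Graphs.
Variables (P T : finType) (G : petri_game P T).

Definition gvert := (marking P * option {set T})%type.

Definition Gr_V0 (v : gvert) : Prop := reachable G v.1 /\ v.2 = None.
Definition Gr_V1 (v : gvert) : Prop :=
  reachable G v.1 /\ exists c, v.2 = Some c /\ c \subset postS G v.1.

Definition Gr_E (v w : gvert) : Prop :=
  (Gr_V0 v \/ Gr_V1 v) /\ (Gr_V0 w \/ Gr_V1 w) /\
  [\/ (exists M c, [/\ v = (M, None), w = (M, Some c) & c \subset postS G M]),
      (exists M M' c t, [/\ v = (M, Some c), w = (M', Some c),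
                           purely_env G t, enabled G t M & M' = fire G M t]) |
      (exists M M' c t, [/\ v = (M, Some c), w = (M', None),
                           system_tr G t /\ t \in c, enabled G t M & M' = fire G M t])].

Definition Gr_X (v : gvert) : Prop :=
  Gr_V1 v /\ exists c, v.2 = Some c /\ bad_cond G v.1 c.

Definition Graph : graph_game gvert :=
  GraphGame Gr_V0 Gr_V1 (init_mk G, None) Gr_E Gr_X.

(* The game Graph'(G).  Vertices (M, None, R) stand for (M, T, R).     *)
Definition gvert' := (marking P * option {set T} * marking P)%type.

Definition Gr'_V0 (v : gvert') : Prop :=
  reachable G v.1.1 /\ v.1.2 = None /\ v.2 = sMset G v.1.1.
Definition Gr'_V1 (v : gvert') : Prop :=
  reachable G v.1.1 /\
  exists c, [/\ v.1.2 = Some c, c \subset postS G v.1.1,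
              (if sM G v.1.1 is Some s then 0 < v.2 s else false)
              & msubset v.2 v.1.1].

Definition Gr'_E (v w : gvert') : Prop :=
  (Gr'_V0 v \/ Gr'_V1 v) /\ (Gr'_V0 w \/ Gr'_V1 w) /\
  [\/ (exists M c, [/\ v = (M, None, sMset G M), w = (M, Some c, sMset G M)
                     & c \subset postS G M]),
      (exists M M' c R R' t, [/\ v = (M, Some c, R), w = (M', Some c, R'),
                           purely_env G t /\ enabled G t M, M' = fire G M t &
                           exists o, 0 < post G t o /\
                                     R' = madd (mdiff R (pre G t)) (msingle o)]) |
      (exists M M' c R t, [/\ v = (M, Some c, R), w = (M', None, sMset G M'),
                           [/\ system_tr G t, t \in c & enabled G t M], M' = fire G M t &
                           msubset R (pre G t)])].

Definition Gr'_X (v : gvert') : Prop :=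
  Gr'_V1 v /\ exists c, v.1.2 = Some c /\ bad_cond G v.1.1 c.

Definition Graph' : graph_game gvert' :=
  GraphGame Gr'_V0 Gr'_V1 (init_mk G, None, sMset G (init_mk G)) Gr'_E Gr'_X.
End Graphs.

From mathcomp Require Import all_boot.
From Stdlib Require Import Classical ClassicalEpsilon.
Set Implicit Arguments. Unset Strict Implicit.

(* The first component of a vertex of Graph'(G) is a vertex of
   Graph(G), and this projection maps edges to edges and bad vertices to bad
   vertices.  At Player 0 vertices the extra component R is forced to be
   {s_M}, so every Player 0 move of Graph(G) lifts to exactly one move of
   Graph'(G).  Hence a strategy of Graph(G) lifts to the strategy of
   Graph'(G) consisting of the paths whose projection it contains: its
   infinite branches project to branches of the original strategy, its
   leaves are dead ends, and none of its nodes visits a bad vertex because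
   no node of a winning strategy does. *)

Section GraphGameFacts.
Variables (V : Type) (GG : graph_game V).
Local Notation I := (gI GG).

Definition is_path (s : seq V) : Prop :=
  forall i, i < size s -> gE GG (nth I (I :: s) i) (nth I s i).

Lemma is_path_rcons s w : is_path (rcons s w) <-> is_path s /\ gE GG (last I s) w.
Proof.
rewrite /is_path size_rcons (last_nth I); split.
  move=> Hp; split=> [i Hi|].
    by have := Hp i (ltnW Hi); rewrite -rcons_cons !nth_rcons /= Hi ltnS (ltnW Hi).
  by have := Hp _ (ltnSn _); rewrite -rcons_cons !nth_rcons /= ltnSn ltnn eqxx.
move=> [Hp Hlast] i; rewrite ltnS leq_eqVlt => /orP [/eqP ->|Hi].
  by rewrite -rcons_cons !nth_rcons /= ltnSn ltnn eqxx.
by rewrite -rcons_cons !nth_rcons /= Hi ltnS (ltnW Hi); apply: Hp.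
Qed.

Lemma inf_play_of_paths (f : nat -> V) :
  f 0 = I -> (forall n, is_path (mkseq (fun i => f i.+1) n)) -> inf_play GG f.
Proof.
move=> f0 Hf; split=> // n.
have := Hf n.+1 n; rewrite size_mkseq ltnSn nth_mkseq //= => /(_ isT).
by case: n {Hf} => [|n] /=; rewrite ?f0 ?nth_mkseq.
Qed.

Lemma strategy_take (S : seq V -> Prop) u k :
  is_strategy GG S -> S u -> S (take k u).
Proof.
case=> _ Hpre _ _ _; rewrite -[u in S u](cat_take_drop k).
elim/last_ind: (drop k u) => [|r w IH]; first by rewrite cats0.
by rewrite -rcons_cat => /Hpre.
Qed.

Lemma strategy_leaf_stuck (S : seq V -> Prop) s :
  is_strategy GG S -> S s -> (forall w, ~ S (rcons s w)) ->
  gV0 GG (last I s) \/ gV1 GG (last I s) -> forall w, ~ gE GG (last I s) w.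
Proof.
case=> _ _ _ Hmove1 Hmove0 Ss Hleaf [HV0|HV1] w Hw.
  by have [w' [_ /(_ w') [_ /(_ erefl)]]] := Hmove0 s Ss HV0 (ex_intro _ w Hw); apply: Hleaf.
exact: Hleaf (Hmove1 s Ss HV1 w Hw).
Qed.

Definition grow (next : seq V -> V) (t : seq V) n :=
  iter n (fun u => rcons u (next u)) t.

Lemma size_grow next t n : size (grow next t n) = size t + n.
Proof. by elim: n => [|n IH]; rewrite ?addn0 //= size_rcons IH addnS. Qed.

Lemma grow_add next t n k : exists r, grow next t (n + k) = grow next t n ++ r.
Proof.
elim: k => [|k [r Hr]]; first by exists [::]; rewrite addn0 cats0.
by exists (rcons r (next (grow next t (n + k)))); rewrite addnS /= Hr rcons_cat.
Qed.

Lemma nth_grow next t n m j :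
  n <= m -> j < size t + n -> nth I (grow next t m) j = nth I (grow next t n) j.
Proof.
move=> Hnm Hj; have [r] := grow_add next t n (m - n); rewrite subnKC // => ->.
by rewrite nth_cat size_grow Hj.
Qed.

Lemma take_grow next t n :
  mkseq (fun i => nth I (I :: grow next t i.+1) i.+1) n = take n (grow next t n).
Proof.
apply: (@eq_from_nth _ I); first by rewrite size_mkseq size_takel // size_grow leq_addl.
move=> j; rewrite size_mkseq => Hj.
by rewrite nth_mkseq // nth_take //= (nth_grow _ Hj) // addnS ltnS leq_addl.
Qed.

Lemma nth_grow_prefix next t i :
  i <= size t -> nth I (I :: grow next t i) i = nth I (I :: t) i.
Proof.
case: i => [|j] //= Hj; have [r /= ->] := grow_add next t 0 j.+1.
by rewrite nth_cat Hj.
Qed.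

(* A bad vertex on a node would lie on every maximal path through it, and
   choosing children greedily yields such a path. *)
Lemma winning_strategy_avoids_bad (S : seq V -> Prop) t i :
  winning_strategy GG S -> S t -> i <= size t -> ~ gX GG (nth I (I :: t) i).
Proof.
move=> [HS [Hfin Hinf]] St Hi Hbad.
pose next u := epsilon (inhabits I) (fun w => S (rcons u w)).
have Sgrow n : S (grow next t n).
  elim: n => [|n IH] //=; apply: (epsilon_spec (inhabits I) (fun w => S (rcons _ w))).
  apply: NNPP => Hleaf; have [r Er] := grow_add next t 0 n.
  have [_ /(_ i)] := Hfin _ IH (fun w Sw => Hleaf (ex_intro _ w Sw)).
  apply; first by rewrite size_grow (leq_trans Hi) ?leq_addr.
  by rewrite /= in Er; rewrite Er -cat_cons nth_cat /= ltnS Hi.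
pose f k := nth I (I :: grow next t k) k.
have [_ Hnobad] : inf_play_won GG f.
  by apply: Hinf => // n; rewrite take_grow; apply: strategy_take.
by apply: (Hnobad i); rewrite /f nth_grow_prefix.
Qed.

End GraphGameFacts.

Section Simulation.
Variables (V V' : Type) (GG : graph_game V) (GG' : graph_game V') (pi : V' -> V).
Hypothesis pi_init : pi (gI GG') = gI GG.
Hypothesis pi_V0 : forall v, gV0 GG' v -> gV0 GG (pi v).
Hypothesis pi_V1 : forall v, gV1 GG' v -> gV1 GG (pi v).
Hypothesis pi_E : forall v w, gE GG' v w -> gE GG (pi v) (pi w).
Hypothesis pi_X : forall v, gX GG' v -> gX GG (pi v).
Hypothesis E'_source : forall v w, gE GG' v w -> gV0 GG' v \/ gV1 GG' v.
Hypothesis V0_move_lift :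
  forall v w, gV0 GG' v -> gE GG (pi v) w -> exists2 w', gE GG' v w' & pi w' = w.
Hypothesis V0_move_inj :
  forall v w1 w2, gV0 GG' v -> gE GG' v w1 -> gE GG' v w2 -> pi w1 = pi w2 -> w1 = w2.

Definition lift_strategy (S : seq V -> Prop) (s : seq V') : Prop :=
  S (map pi s) /\ is_path GG' s.

Lemma last_map_pi s : last (gI GG) (map pi s) = pi (last (gI GG') s).
Proof. by rewrite -pi_init last_map. Qed.

Lemma nth_map_pi s i :
  i <= size s -> nth (gI GG) (gI GG :: map pi s) i = pi (nth (gI GG') (gI GG' :: s) i).
Proof. by move=> Hi; rewrite -pi_init -map_cons (nth_map (gI GG')). Qed.

Lemma lift_is_strategy S : is_strategy GG S -> is_strategy GG' (lift_strategy S).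
Proof.
case=> Snil Spre Sedge Smove1 Smove0; split.
- by split=> // i.
- by move=> s w [+ /is_path_rcons [Hp _]]; rewrite map_rcons => /Spre.
- by move=> s w _ [_ /is_path_rcons [_ He]].
- move=> s [Ss Hp] HV1 w He; split; last exact/is_path_rcons.
  rewrite map_rcons; apply: Smove1 => //; rewrite last_map_pi; [exact: pi_V1 | exact: pi_E].
- move=> s [Ss Hp] HV0 [w0 Hw0].
  have [w [Hw Hchoice]] : exists w, gE GG (pi (last (gI GG') s)) w /\
      forall w', S (rcons (map pi s) w') <-> w' = w.
    rewrite -last_map_pi; apply: Smove0 => //; rewrite last_map_pi.
      exact: pi_V0.
    by exists (pi w0); apply: pi_E.
  have [w' Hw' Ew'] := V0_move_lift HV0 Hw.
  exists w'; split=> // w''; split.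
    move=> [+ /is_path_rcons [_ Hw'']]; rewrite map_rcons => /Hchoice Ew''.
    by apply: V0_move_inj HV0 Hw'' Hw' _; rewrite Ew'' Ew'.
  move=> ->; split; last exact/is_path_rcons.
  by rewrite map_rcons Hchoice.
Qed.

Lemma lift_winning S : winning_strategy GG S -> winning_strategy GG' (lift_strategy S).
Proof.
move=> HS; have HS' := lift_is_strategy HS.1.
split=> //; split.
- move=> s [Ss Hp] Hleaf; split.
    split=> // w He.
    exact: strategy_leaf_stuck HS' (conj Ss Hp) Hleaf (E'_source He) w He.
  move=> i Hi /pi_X; rewrite -nth_map_pi //.
  by apply: winning_strategy_avoids_bad HS Ss _; rewrite size_map.
- move=> f f0 Hf; split; first exact: inf_play_of_paths (fun n => (Hf n).2).
  move=> n /pi_X; apply: ((HS.2.2 (pi \o f) _ _).2 n); first by rewrite /= f0.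
  by move=> m; have [+ _] := Hf m; rewrite /mkseq -map_comp.
Qed.

End Simulation.

Section PetriGraphs.
Variables (P T : finType) (G : petri_game P T).
Hypothesis osp : one_system_player G.

Lemma sM_reachable M : reachable G M -> exists s, sM G M = Some s.
Proof.
move=> HM; have := osp HM; rewrite /sM; case: pickP => [s _|none]; first by exists s.
rewrite big1 // => p Hp; apply/eqP; rewrite -leqn0 leqNgt.
by move: (none p); rewrite Hp /= => /negbT.
Qed.

Lemma sMset_sub M : msubset (sMset G M) M.
Proof.
apply/forallP=> p; rewrite /sMset ffunE /sM.
by case: pickP => [q /andP [_ Mq]|_] //; case: eqP => // [[<-]].
Qed.

Lemma Gr'_V0_fst v : Gr'_V0 G v -> Gr_V0 G v.1.
Proof. by case=> ? [? _]. Qed.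

Lemma Gr'_V1_fst v : Gr'_V1 G v -> Gr_V1 G v.1.
Proof. by case=> ? [c [? ? _ _]]; split=> //; exists c. Qed.

Lemma Gr'_E_fst v w : Gr'_E G v w -> Gr_E G v.1 w.1.
Proof.
have Vfst u : Gr'_V0 G u \/ Gr'_V1 G u -> Gr_V0 G u.1 \/ Gr_V1 G u.1.
  by case=> [/Gr'_V0_fst|/Gr'_V1_fst]; [left | right].
case=> /Vfst Hv [/Vfst Hw Hmove]; do 2!split=> //.
case: Hmove => [[M [c [-> -> ?]]]|[M [M' [c [? [? [t [-> -> [? ?] ? _]]]]]]]|
                [M [M' [c [? [t [-> -> [? ? ?] ? _]]]]]]].
- by apply: Or31; exists M, c.
- by apply: Or32; exists M, M', c, t.
- by apply: Or33; exists M, M', c, t.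
Qed.

Lemma Gr'_X_fst v : Gr'_X G v -> Gr_X G v.1.
Proof. by case=> /Gr'_V1_fst HV1 [c Hc]; split=> //; exists c. Qed.

Lemma Gr'_E_from_V0 v w : Gr'_V0 G v -> Gr'_E G v w -> w.2 = sMset G v.1.1.
Proof.
case=> _ [Hnone _] [_ [_ [[M [c [Ev -> _]]]|[? [? [? [? [? [? [Ev _]]]]]]]|
                           [? [? [? [? [? [Ev _]]]]]]]]];
by rewrite Ev in Hnone *.
Qed.

Lemma Gr'_V0_lift_move v w : Gr'_V0 G v -> Gr_E G v.1 w ->
  exists2 w', Gr'_E G v w' & w'.1 = w.
Proof.
case: v => [[M o] R] Hv; have [HM [/= Eo ER]] := Hv; subst o R.
case=> _ [_ [[M' [c [[<-] -> Hc]]]|[? [? [? [? [[] //]]]]]|[? [? [? [? [[] //]]]]]]].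
have [s Hs] := sM_reachable HM.
exists (M, Some c, sMset G M) => //; split; first by left.
split; last by apply: Or31; exists M, c.
right; split=> //; exists c; split=> //; last exact: sMset_sub.
by rewrite Hs /sMset ffunE Hs eqxx.
Qed.

Lemma Gr'_V0_move_inj v w1 w2 : Gr'_V0 G v ->
  Gr'_E G v w1 -> Gr'_E G v w2 -> w1.1 = w2.1 -> w1 = w2.
Proof.
move=> Hv /(Gr'_E_from_V0 Hv) E1 /(Gr'_E_from_V0 Hv) E2 E12.
by rewrite [w1]surjective_pairing [w2]surjective_pairing E1 E2 E12.
Qed.

End PetriGraphs.

Theorem theorem2 (P T : finType) (G : petri_game P T) :
  valid_transitions G ->
  one_system_player G ->
  bounded G ->
  player0_wins (Graph G) ->
  player0_wins (Graph' G).
Proof.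
move=> _ osp _ [S HS]; exists (lift_strategy (Graph' G) fst S).
apply: lift_winning HS => //.
- exact: Gr'_V0_fst.
- exact: Gr'_V1_fst.
- exact: Gr'_E_fst.
- exact: Gr'_X_fst.
- by move=> v w [].
- exact: Gr'_V0_lift_move.
- exact: Gr'_V0_move_inj.
Qed.
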